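(* Let $A,B$ be interior algebras. Then $\{\mathcal{O}(h): h\in\mathrm{hom}(A,B)\}=\mathrm{hom}(\mathcal{O}(A),\mathcal{O}(B))$ if and only if every interior algebra homomorphism $h\colon A^*\to B^*$ has an extension to a homomorphism $A\to B$.
   Context: An interior algebra $\langle B,g\rangle$ is a Boolean algebra with an operator $g$ satisfying $g(1)=1$, $g(xy)=g(x)g(y)$, $g(x)\le x$, $gg(x)=g(x)$; $a$ is open if $g(a)=a$. $\mathcal{O}(B)=B^\circ$ is the Heyting algebra of open elements with $a\Rightarrow b=g(-a+b)$, and $\mathcal{O}(h)$ is the restriction of a homomorphism $h$ to open elements. $\mathrm{hom}(\mathcal{O}(A),\mathcal{O}(B))$ is the set of Heyting algebra homomorphisms. $A^*$ is the subalgebra of $A$ generated by its open elements. *)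

(* A Boolean algebra is a complemented distributive lattice
   with top and bottom: mathcomp's [ctbDistrLatticeType]. *)
From HB Require Import structures.
From mathcomp Require Import all_boot all_order.
Set Implicit Arguments. Unset Strict Implicit. Unset Printing Implicit Defensive.
Import Order.Theory.
Local Open Scope order_scope.

Section Interior.
Variables (d : Order.disp_t) (B : ctbDistrLatticeType d).

Definition interior_op (g : B -> B) : Prop :=
  ((g \top = \top) /\
      (forall x y, g (x `&` y) = g x `&` g y) /\
      (forall x, g x <= x) /\
      (forall x, g (g x) = g x)).

Definition is_open (g : B -> B) (a : B) : Prop := g a = a.

Definition himpl (g : B -> B) (a b : B) : B := g (~` a `|` b).

Inductive in_star (g : B -> B) : B -> Prop :=
  | star_open a : is_open g a -> in_star g a
  | star_bot : in_star g \bot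
  | star_top : in_star g \top
  | star_meet a b : in_star g a -> in_star g b -> in_star g (a `&` b)
  | star_join a b : in_star g a -> in_star g b -> in_star g (a `|` b)
  | star_compl a : in_star g a -> in_star g (~` a).
End Interior.

Section Homs.
Variables (dA dB : Order.disp_t)
  (A : ctbDistrLatticeType dA) (B : ctbDistrLatticeType dB)
  (gA : A -> A) (gB : B -> B).

Definition int_hom (h : A -> B) : Prop :=
  ((h \bot = \bot) /\
      (h \top = \top) /\
      (forall x y, h (x `&` y) = h x `&` h y) /\
      (forall x y, h (x `|` y) = h x `|` h y) /\
      (forall x, h (~` x) = ~` h x) /\
      (forall x, h (gA x) = gB (h x))).

(* h, considered only on O(A), is a Heyting algebra homomorphism O(A) -> O(B)
   (its values outside O(A) are irrelevant) *)
Definition heyting_hom_on_opens (h : A -> B) : Prop :=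
  ((forall a, is_open gA a -> is_open gB (h a)) /\
      (h \bot = \bot) /\
      (h \top = \top) /\
      (forall a b, is_open gA a -> is_open gA b -> h (a `&` b) = h a `&` h b) /\
      (forall a b, is_open gA a -> is_open gA b -> h (a `|` b) = h a `|` h b) /\
      (forall a b, is_open gA a -> is_open gA b ->
         h (himpl gA a b) = himpl gB (h a) (h b))).

(* h, considered only on A^*, is an interior algebra homomorphism A^* -> B^*
   (its values outside A^* are irrelevant) *)
Definition int_hom_on_star (h : A -> B) : Prop :=
  ((forall a, in_star gA a -> in_star gB (h a)) /\
      (h \bot = \bot) /\
      (h \top = \top) /\
      (forall a b, in_star gA a -> in_star gA b -> h (a `&` b) = h a `&` h b) /\
      (forall a b, in_star gA a -> in_star gA b -> h (a `|` b) = h a `|` h b) /\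
      (forall a, in_star gA a -> h (~` a) = ~` h a) /\
      (forall a, in_star gA a -> h (gA a) = gB (h a))).

(* { O(h) : h in hom(A,B) } = hom(O(A), O(B)), as an equality of sets of
   maps O(A) -> O(B); two such maps are equal iff they agree on all opens. *)
Definition restrictions_are_all_heyting_homs : Prop :=
  (forall h, int_hom h -> heyting_hom_on_opens h) /\
  (forall k, heyting_hom_on_opens k ->
     exists h, int_hom h /\ forall a, is_open gA a -> h a = k a).

Definition star_homs_extend : Prop :=
  forall k, int_hom_on_star k ->
    exists h, int_hom h /\ forall a, in_star gA a -> h a = k a.
End Homs.

From mathcomp Require Import all_boot all_order.
From Stdlib Require Import ClassicalEpsilon.
Set Implicit Arguments. Unset Strict Implicit. Unset Printing Implicit Defensive.
Import Order.Theory.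
Local Open Scope order_scope.

(* Every element of A^* is a finite meet of clauses -a + b with a, b open.  A
   Heyting homomorphism k : O(A) -> O(B) is monotone on such normal forms:
   the clause -a + b splits an inequality u & (-a + b) & X <= v, with u, v
   open, into u & X <= v + a and u & b & X <= v, and so on down to
   inequalities between opens, which k preserves.  So sending each clause -a + b to -k(a) + k(b)
   extends k to A^*; the extension preserves meets, joins, complements (by
   uniqueness of complements) and the interior, since g(-a + b) = a => b.
   Both implications then follow because an interior homomorphism restricts
   to a Heyting homomorphism on opens and is determined on A^* by its values
   on opens. *)

Section Clauses.
Variables (d : Order.disp_t) (L : ctbDistrLatticeType d).
Implicit Types (x y v a b : L) (p q : L * L) (l : seq (L * L)).

Definition clause p : L := ~` p.1 `|` p.2.

Definition cnf l : L := \meet_(p <- l) clause p.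

Definition clause_join p q : L * L := (p.1 `&` q.1, p.2 `|` q.2).

Lemma clause_top y : clause (\top, y) = y.
Proof. by rewrite /clause compl1 join0x. Qed.

Lemma cnf_nil : cnf [::] = \top.
Proof. exact: big_nil. Qed.

Lemma cnf_cons p l : cnf (p :: l) = clause p `&` cnf l.
Proof. exact: big_cons. Qed.

Lemma cnf_seq1 y : cnf [:: (\top, y)] = y.
Proof. by rewrite /cnf big_seq1 clause_top. Qed.

Lemma cnf_cat l1 l2 : cnf (l1 ++ l2) = cnf l1 `&` cnf l2.
Proof. exact: big_cat. Qed.

Lemma clause_joinE p q : clause (clause_join p q) = clause p `|` clause q.
Proof.
by rewrite /clause /= complI -!joinA; congr (_ `|` _); rewrite joinCA.
Qed.

Lemma cnf_allpairs l1 l2 :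
  cnf [seq clause_join p q | p <- l1, q <- l2] = cnf l1 `|` cnf l2.
Proof.
have joinl_morph (c : L) : {morph Order.join^~ c : x y / x `&` y}.
  by move=> x y; exact: joinIl.
have joinr_morph (c : L) : {morph Order.join c : x y / x `&` y}.
  by move=> x y; exact: joinIr.
rewrite /cnf big_allpairs_dep (big_morph _ (joinl_morph _) (join1x _)).
apply: eq_bigr => p _; rewrite (big_morph _ (joinr_morph _) (joinx1 _)).
by apply: eq_bigr => q _; rewrite clause_joinE.
Qed.

Lemma compl_clause a b : ~` clause (a, b) = cnf [:: (\top, a); (b, \bot)].
Proof.
by rewrite /cnf !big_cons big_nil clause_top /clause complU complK joinx0 meetx1.
Qed.

Lemma le_clause x a b : (x <= clause (a, b)) = (a `&` x <= b).
Proof. by rewrite -leBLR diffE complK meetC. Qed.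

Lemma meet_cnf_cons_le x a b l v :
  (x `&` cnf ((a, b) :: l) <= v) =
  (x `&` cnf l <= v `|` a) && (x `&` b `&` cnf l <= v).
Proof.
by rewrite cnf_cons meetCA meetUl leUx meetC -diffE leBLR joinC meetCA meetA.
Qed.

Lemma compl_unique x y : x `&` y = \bot -> x `|` y = \top -> y = ~` x.
Proof.
move=> xy0 xy1; apply/eqP; rewrite eq_le; apply/andP; split.
  by rewrite -disj_leC meetC xy0.
by rewrite leCx -[x in _ <= x]complK -disj_leC -complU joinC xy1 compl1.
Qed.

End Clauses.

Section OpenClauses.
Variables (d : Order.disp_t) (L : ctbDistrLatticeType d) (g : L -> L).
Implicit Types (x y a b : L) (p : L * L) (l : seq (L * L)).

Definition open_pairs l := {in l, forall p, is_open g p.1 /\ is_open g p.2}.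

Definition open_cnf x := exists2 l, open_pairs l & cnf l = x.

Lemma open_pairs_cons p l :
  open_pairs (p :: l) -> [/\ is_open g p.1, is_open g p.2 & open_pairs l].
Proof.
move=> op; have [o1 o2] := op p (mem_head _ _).
by split=> // q lq; apply: op; rewrite in_cons lq orbT.
Qed.

Lemma open_pairs_cat l1 l2 :
  open_pairs l1 -> open_pairs l2 -> open_pairs (l1 ++ l2).
Proof. by move=> o1 o2 p; rewrite mem_cat => /orP [/o1 | /o2]. Qed.

Lemma cnf_in_star l : open_pairs l -> in_star g (cnf l).
Proof.
elim: l => [_|p l IH /open_pairs_cons [o1 o2 ol]].
  by rewrite cnf_nil; exact: star_top.
rewrite cnf_cons; apply: star_meet; last exact: IH.
by apply: star_join; [apply/star_compl/star_open | apply: star_open].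
Qed.

Hypothesis hg : interior_op g.

Lemma interior_top : g \top = \top. Proof. by case: hg. Qed.

Lemma interior_meet x y : g (x `&` y) = g x `&` g y.
Proof. by case: hg => _ []. Qed.

Lemma interior_le x : g x <= x. Proof. by case: hg => _ [_ []]. Qed.

Lemma interior_mono x y : x <= y -> g x <= g y.
Proof. by move=> /meet_idPl <-; rewrite interior_meet leIr. Qed.

Lemma open_interior x : is_open g (g x).
Proof. by rewrite /is_open; case: hg => _ [_ [_ ->]]. Qed.

Lemma open_top : is_open g \top. Proof. exact: interior_top. Qed.

Lemma open_bot : is_open g \bot.
Proof. by apply/eqP; rewrite -lex0 interior_le. Qed.

Lemma open_meet a b : is_open g a -> is_open g b -> is_open g (a `&` b).
Proof. by rewrite /is_open interior_meet => -> ->. Qed.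

Lemma open_join a b : is_open g a -> is_open g b -> is_open g (a `|` b).
Proof.
move=> oa ob; apply/eqP; rewrite eq_le interior_le /=.
by rewrite -{1}oa -{1}ob leUx !interior_mono ?leUl ?leUr.
Qed.

Lemma open_pairs_atom a : is_open g a -> open_pairs [:: (\top, a)].
Proof. by move=> oa p; rewrite inE => /eqP ->; split; [exact: open_top |]. Qed.

Lemma open_pairs_allpairs l1 l2 : open_pairs l1 -> open_pairs l2 ->
  open_pairs [seq clause_join p q | p <- l1, q <- l2].
Proof.
move=> o1 o2 _ /allpairsP [[p q] [/o1 [op1 op2] /o2 [oq1 oq2] ->]].
by split; [exact: open_meet | exact: open_join].
Qed.

Lemma interior_cnf l : g (cnf l) = cnf [seq (\top, g (clause p)) | p <- l].
Proof.
rewrite /cnf big_map (big_morph g interior_meet interior_top).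
by apply: eq_bigr => p _; rewrite clause_top.
Qed.

Lemma open_pairs_interior l : open_pairs [seq (\top, g (clause p)) | p <- l].
Proof.
by move=> _ /mapP [p _ ->]; split; [exact: open_top | exact: open_interior].
Qed.

Lemma open_cnf_open a : is_open g a -> open_cnf a.
Proof.
by move=> oa; exists [:: (\top, a)]; [exact: open_pairs_atom | exact: cnf_seq1].
Qed.

Lemma open_cnf_meet x y : open_cnf x -> open_cnf y -> open_cnf (x `&` y).
Proof.
move=> [l1 o1 <-] [l2 o2 <-].
by exists (l1 ++ l2); [exact: open_pairs_cat | exact: cnf_cat].
Qed.

Lemma open_cnf_join x y : open_cnf x -> open_cnf y -> open_cnf (x `|` y).
Proof.
move=> [l1 o1 <-] [l2 o2 <-]; exists [seq clause_join p q | p <- l1, q <- l2].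
  exact: open_pairs_allpairs.
exact: cnf_allpairs.
Qed.

Lemma open_cnf_compl x : open_cnf x -> open_cnf (~` x).
Proof.
move=> [l + <-]; elim: l => [_|[a b] l IH /open_pairs_cons [/= oa ob ol]].
  by rewrite cnf_nil compl1; apply/open_cnf_open/open_bot.
rewrite cnf_cons complI; apply: open_cnf_join; last exact: IH.
rewrite compl_clause; exists [:: (\top, a); (b, \bot)] => //.
move=> p; rewrite !inE => /orP [] /eqP -> /=; split=> //.
  exact: open_top.
exact: open_bot.
Qed.

Lemma open_cnf_interior x : open_cnf x -> open_cnf (g x).
Proof.
by move=> [l _ <-]; rewrite interior_cnf; eexists; first exact: open_pairs_interior.
Qed.

Lemma in_starP x : in_star g x <-> open_cnf x.
Proof.
split; last by move=> [l ol <-]; exact: cnf_in_star.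
elim=> {x} [a oa | | | a b _ sa _ sb | a b _ sa _ sb | a _ sa].
- exact: open_cnf_open.
- exact/open_cnf_open/open_bot.
- exact/open_cnf_open/open_top.
- exact: open_cnf_meet.
- exact: open_cnf_join.
- exact: open_cnf_compl.
Qed.

End OpenClauses.

Section HeytingExtension.
Variables (dA dB : Order.disp_t)
  (A : ctbDistrLatticeType dA) (B : ctbDistrLatticeType dB)
  (gA : A -> A) (gB : B -> B) (k : A -> B).
Hypotheses (hgA : interior_op gA) (hgB : interior_op gB).
Hypotheses (k_open : forall a, is_open gA a -> is_open gB (k a))
  (k_bot : k \bot = \bot) (k_top : k \top = \top)
  (k_meet : forall a b, is_open gA a -> is_open gA b -> k (a `&` b) = k a `&` k b)
  (k_join : forall a b, is_open gA a -> is_open gA b -> k (a `|` b) = k a `|` k b)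
  (k_himpl : forall a b, is_open gA a -> is_open gA b ->
     k (himpl gA a b) = himpl gB (k a) (k b)).
Implicit Types (x y u v a b : A) (l : seq (A * A)).

Definition map_pairs l : seq (B * B) := [seq (k p.1, k p.2) | p <- l].

Lemma map_pairs_cons p l : map_pairs (p :: l) = (k p.1, k p.2) :: map_pairs l.
Proof. by []. Qed.

Lemma open_pairs_map l : open_pairs gA l -> open_pairs gB (map_pairs l).
Proof. by move=> ol _ /mapP [p /ol [o1 o2] ->]; split; apply: k_open. Qed.

Lemma k_mono a b : is_open gA a -> is_open gA b -> a <= b -> k a <= k b.
Proof. by move=> oa ob /meet_idPl <-; rewrite k_meet // leIr. Qed.

Lemma map_meet_cnf_le l u v : open_pairs gA l -> is_open gA u -> is_open gA v ->
  u `&` cnf l <= v -> k u `&` cnf (map_pairs l) <= k v.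
Proof.
elim: l u v => [|[a b] l IH] u v.
  by move=> _ ou ov; rewrite /= !cnf_nil !meetx1; exact: k_mono.
rewrite map_pairs_cons !meet_cnf_cons_le => /open_pairs_cons [oa ob ol] ou ov.
case/andP=> le_a le_b; apply/andP; split.
  by rewrite -k_join //; apply: IH => //; exact: open_join.
by rewrite -k_meet //; apply: IH => //; exact: open_meet.
Qed.

Lemma cnf_map_pairs_mono l1 l2 : open_pairs gA l1 -> open_pairs gA l2 ->
  cnf l1 <= cnf l2 -> cnf (map_pairs l1) <= cnf (map_pairs l2).
Proof.
move=> o1; elim: l2 => [|[a b] l2 IH]; first by move=> _ _; rewrite /= !cnf_nil lex1.
rewrite map_pairs_cons !cnf_cons !lexI !le_clause => /open_pairs_cons [oa ob o2].
by case/andP=> le_a le_l2; rewrite (map_meet_cnf_le o1 oa ob le_a) IH.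
Qed.

Lemma cnf_map_pairs_eq l1 l2 : open_pairs gA l1 -> open_pairs gA l2 ->
  cnf l1 = cnf l2 -> cnf (map_pairs l1) = cnf (map_pairs l2).
Proof.
by move=> o1 o2 e; apply/eqP; rewrite eq_le !cnf_map_pairs_mono ?e.
Qed.

Lemma map_pairs_allpairs l1 l2 : open_pairs gA l1 -> open_pairs gA l2 ->
  map_pairs [seq clause_join p q | p <- l1, q <- l2] =
  [seq clause_join p q | p <- map_pairs l1, q <- map_pairs l2].
Proof.
move=> o1 o2; rewrite /map_pairs map_allpairs allpairs_mapl allpairs_mapr.
apply/eq_in_allpairs => p q /o1 [op1 op2] /o2 [oq1 oq2].
by rewrite /clause_join /= k_meet ?k_join.
Qed.

Lemma map_pairs_interior l : open_pairs gA l ->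
  map_pairs [seq (\top, gA (clause p)) | p <- l] =
  [seq (\top, gB (clause p)) | p <- map_pairs l].
Proof.
move=> ol; rewrite /map_pairs -!map_comp; apply/eq_in_map => -[a b] /ol [oa ob].
by rewrite /= k_top; have := k_himpl oa ob; rewrite /himpl => ->.
Qed.

(* By [cnf_map_pairs_eq] the chosen normal form does not matter on A^*;
   outside A^* the value is junk. *)
Definition star_ext (x : A) : B :=
  cnf (map_pairs (epsilon (inhabits [::]) (fun l => open_pairs gA l /\ cnf l = x))).

Lemma star_extE l : open_pairs gA l -> star_ext (cnf l) = cnf (map_pairs l).
Proof.
move=> ol; rewrite /star_ext.
have [o1 e1] := epsilon_spec (inhabits [::])
  (fun l' => open_pairs gA l' /\ cnf l' = cnf l) (ex_intro _ l (conj ol erefl)).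
exact: cnf_map_pairs_eq o1 ol e1.
Qed.

Lemma star_ext_open a : is_open gA a -> star_ext a = k a.
Proof.
move=> oa; rewrite -{1}(cnf_seq1 a) star_extE; last exact: open_pairs_atom.
by rewrite /= k_top cnf_seq1.
Qed.

Lemma star_ext_meet x y : open_cnf gA x -> open_cnf gA y ->
  star_ext (x `&` y) = star_ext x `&` star_ext y.
Proof.
move=> [l1 o1 <-] [l2 o2 <-].
rewrite -cnf_cat !star_extE //; last exact: open_pairs_cat.
by rewrite /map_pairs map_cat cnf_cat.
Qed.

Lemma star_ext_join x y : open_cnf gA x -> open_cnf gA y ->
  star_ext (x `|` y) = star_ext x `|` star_ext y.
Proof.
move=> [l1 o1 <-] [l2 o2 <-].
rewrite -cnf_allpairs !star_extE //; last exact: open_pairs_allpairs.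
by rewrite map_pairs_allpairs // cnf_allpairs.
Qed.

Lemma star_ext_compl x : open_cnf gA x -> star_ext (~` x) = ~` star_ext x.
Proof.
move=> sx; have sCx := open_cnf_compl hgA sx.
apply: compl_unique.
  by rewrite -star_ext_meet // meetxC star_ext_open ?k_bot //; exact: open_bot.
by rewrite -star_ext_join // joinxC star_ext_open ?k_top //; exact: open_top.
Qed.

Lemma star_ext_interior x : open_cnf gA x -> star_ext (gA x) = gB (star_ext x).
Proof.
move=> [l ol <-]; rewrite star_extE // !interior_cnf // star_extE.
  by rewrite map_pairs_interior.
exact: open_pairs_interior.
Qed.

Lemma star_ext_in_star x : open_cnf gA x -> in_star gB (star_ext x).
Proof.
by move=> [l ol <-]; rewrite star_extE //; apply/cnf_in_star/open_pairs_map.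
Qed.

Lemma star_ext_hom : int_hom_on_star gA gB star_ext.
Proof.
have S x : in_star gA x -> open_cnf gA x := proj1 (in_starP hgA x).
split; first by move=> a /S; exact: star_ext_in_star.
split; first by rewrite star_ext_open ?k_bot //; exact: open_bot.
split; first by rewrite star_ext_open ?k_top //; exact: open_top.
split; first by move=> a b /S sa /S sb; exact: star_ext_meet.
split; first by move=> a b /S sa /S sb; exact: star_ext_join.
split; first by move=> a /S; exact: star_ext_compl.
by move=> a /S; exact: star_ext_interior.
Qed.

End HeytingExtension.

Lemma heyting_hom_extends_to_star (dA dB : Order.disp_t)
    (A : ctbDistrLatticeType dA) (B : ctbDistrLatticeType dB)
    (gA : A -> A) (gB : B -> B) (k : A -> B) :
  interior_op gA -> interior_op gB -> heyting_hom_on_opens gA gB k ->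
  exists k', int_hom_on_star gA gB k' /\ forall a, is_open gA a -> k' a = k a.
Proof.
move=> hgA hgB [k_open [k_bot [k_top [k_meet [k_join k_himpl]]]]].
exists (star_ext gA k); split; first exact: star_ext_hom.
exact: star_ext_open.
Qed.

Section Restrictions.
Variables (dA dB : Order.disp_t)
  (A : ctbDistrLatticeType dA) (B : ctbDistrLatticeType dB)
  (gA : A -> A) (gB : B -> B).

Lemma int_hom_heyting_on_opens h : int_hom gA gB h -> heyting_hom_on_opens gA gB h.
Proof.
move=> [h0 [h1 [hI [hU [hC hG]]]]].
split; first by move=> a oa; rewrite /is_open -hG oa.
do 2 split=> //; split=> [a b _ _|]; first exact: hI.
split=> [a b _ _|a b _ _]; first exact: hU.
by rewrite /himpl hG hU hC.
Qed.

Lemma star_hom_heyting_on_opens k :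
  int_hom_on_star gA gB k -> heyting_hom_on_opens gA gB k.
Proof.
move=> [kS [k0 [k1 [kI [kU [kC kG]]]]]].
have S a : is_open gA a -> in_star gA a := @star_open _ _ gA a.
split; first by move=> a oa; rewrite /is_open -kG ?oa //; exact: S.
do 2 split=> //; split; first by move=> a b /S sa /S sb; exact: kI.
split; first by move=> a b /S sa /S sb; exact: kU.
move=> a b /S sa /S sb.
have sCa := star_compl sa.
by rewrite /himpl kG ?kU ?kC //; exact: star_join.
Qed.

Lemma int_hom_eq_on_star h k : int_hom gA gB h -> int_hom_on_star gA gB k ->
  (forall a, is_open gA a -> h a = k a) -> forall a, in_star gA a -> h a = k a.
Proof.
move=> [h0 [h1 [hI [hU [hC _]]]]] [_ [k0 [k1 [kI [kU [kC _]]]]]] e.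
move=> a; elim=> {a} [a /e // | | | a b sa ea sb eb | a b sa ea sb eb | a sa ea].
- by rewrite h0 k0.
- by rewrite h1 k1.
- by rewrite hI kI // ea eb.
- by rewrite hU kU // ea eb.
- by rewrite hC kC // ea.
Qed.

End Restrictions.

Theorem lemma5p10 (dA dB : Order.disp_t)
  (A : ctbDistrLatticeType dA) (B : ctbDistrLatticeType dB)
  (gA : A -> A) (gB : B -> B)
  (hgA : interior_op gA) (hgB : interior_op gB) :
  restrictions_are_all_heyting_homs gA gB <-> star_homs_extend gA gB.
Proof.
split=> [[_ onto] k hk | ext].
  have [h [hh ehk]] := onto k (star_hom_heyting_on_opens hk).
  by exists h; split => //; exact: int_hom_eq_on_star hh hk ehk.
split=> [h|k hk]; first exact: int_hom_heyting_on_opens.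
have [k' [hk' ek']] := heyting_hom_extends_to_star hgA hgB hk.
have [h [hh ehk']] := ext k' hk'.
by exists h; split=> // a oa; rewrite ehk' ?ek' //; exact: star_open.
Qed.
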